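(* Let $m\ge2$, let $C_1,\dots,C_m$ be real full-row-rank matrices with $n$ columns, $P_i=C_i'(C_iC_i')^{-1}C_i$, and let $M$ be the $mn\times mn$ matrix of the map $(x_1,\dots,x_m)\mapsto\big(x_i-\tfrac12P_i(x_i-x_{i-1})\big)_{i=1}^m$ with $x_0:=x_m$. Suppose that for all $x_1,\dots,x_m\in\mathbb R^n$, $C_ix_i=C_ix_{i-1}$ for all $i$ implies $x_1=\cdots=x_m$ (well-configuredness of the directed cycle $1\to\cdots\to m\to1$). Then the eigenvalue $1$ of $M$ has algebraic multiplicity exactly $n$ (equal to its geometric multiplicity).
   Context: $'$ denotes transpose; $P_i$ is the orthogonal projection onto $(\ker C_i)^\perp$. *)

From HB Require Import structures.
From mathcomp Require Import all_boot all_order all_algebra.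
Set Implicit Arguments. Unset Strict Implicit. Unset Printing Implicit Defensive.
Import Order.TTheory GRing.Theory Num.Theory.
Local Open Scope ring_scope.

(* Blocks are indexed by i : 'I_m (0-based); the predecessor of block i on the
   cycle is ord_pred i, i.e. (i-1) mod m, so block 0's predecessor is block m-1
   (this encodes x_0 := x_m). *)

Definition projC (R : realFieldType) (r n : nat) (C : 'M[R]_(r, n)) : 'M[R]_n :=
  C^T *m invmx (C *m C^T) *m C.

(* The map (x_1..x_m) |-> (x_i - 1/2 P_i (x_i - x_{i-1}))_i, where the tuple is
   stored as X : 'M_(m, n) whose i-th row is x_i^T. *)
Definition cycmap (R : realFieldType) (m n : nat) (r : 'I_m -> nat)
  (C : forall i, 'M[R]_(r i, n)) (X : 'M[R]_(m, n)) : 'M[R]_(m, n) :=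
  \matrix_(i, k) (row i X - 2^-1 *: ((row i X - row (ord_pred i) X) *m (projC (C i))^T)) 0 k.

(* The mn x mn matrix of that map on stacked column vectors (x_1;...;x_m):
   mxvec stacks the rows of X, i.e. the vectors x_1, ..., x_m in order.
   lin1_mx g is the matrix with u *m lin1_mx g = g u (row vectors), so its
   transpose is the matrix acting on column vectors. *)
Definition cycM (R : realFieldType) (m n : nat) (r : 'I_m -> nat)
  (C : forall i, 'M[R]_(r i, n)) : 'M[R]_(m * n) :=
  (lin1_mx (fun v : 'rV[R]_(m * n) => mxvec (cycmap C (vec_mx v))))^T.

Definition well_configured (R : realFieldType) (m n : nat) (r : 'I_m -> nat)
  (C : forall i, 'M[R]_(r i, n)) : Prop :=
  forall x : 'I_m -> 'cV[R]_n,
    (forall i, C i *m x i = C i *m x (ord_pred i)) -> forall i j, x i = x j.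

From HB Require Import structures.
From mathcomp Require Import all_boot all_order all_algebra.
Import Order.TTheory GRing.Theory Num.Theory.
Local Open Scope ring_scope.
Set Implicit Arguments. Unset Strict Implicit. Unset Printing Implicit Defensive.

(* The eigenvalue 1 of M is semisimple (no Jordan chain of length 2), so its
   algebraic multiplicity is the dimension of its eigenspace.  A fixed point
   satisfies P_i (x_i - x_{i-1}) = 0, i.e. C_i x_i = C_i x_{i-1}, so by
   well-configuredness the eigenspace consists of the constant tuples and has
   dimension n.  If y = Mx - x is fixed, it is a constant tuple c with
   c = -1/2 P_i d_i for d_i = x_i - x_{i-1}; then P_i c = c and
   |c|^2 = -1/2 <d_i, c> for every i, and summing over the cycle the d_i
   telescope to 0, so c = 0.
   MathComp matrices act on row vectors, so we work with the transpose of M. *)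

Section CharPoly.
Variable F : fieldType.

Lemma char_poly_trmx N (A : 'M[F]_N) : char_poly A^T = char_poly A.
Proof.
rewrite /char_poly -[RHS]det_tr /char_poly_mx.
by rewrite linearB /= tr_scalar_mx map_trmx.
Qed.

Lemma char_poly_similar N (P A B : 'M[F]_N) :
  P \in unitmx -> P *m A = B *m P -> char_poly A = char_poly B.
Proof.
move=> uP PA; set Pp := map_mx polyC P.
have PpA : Pp *m char_poly_mx A = char_poly_mx B *m Pp.
  by rewrite mulmxBr mulmxBl -!map_mxM PA scalar_mxC.
have /mulIf : \det Pp != 0 by rewrite det_map_mx polyC_eq0 -unitfE -unitmxE.
by apply; rewrite mulrC -det_mulmx PpA det_mulmx.
Qed.

Lemma char_poly_scalar k (a : F) : char_poly (a%:M : 'M_k) = ('X - a%:P) ^+ k.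
Proof.
rewrite char_poly_trig ?scalar_mx_is_trig // -[k in RHS]card_ord -prodr_const.
by apply: eq_bigr => i _; rewrite mxE eqxx.
Qed.

Lemma mup_char_poly_block k q (a : F) (A : 'M[F]_q) : ~~ eigenvalue A a ->
  mup a (char_poly (block_mx (a%:M : 'M_k) 0 0 A)) = k.
Proof.
rewrite eigenvalue_root_char => Na.
rewrite /char_poly char_block_diag_mx det_ublock.
change (mup a (char_poly (a%:M : 'M_k) * char_poly A) = k).
by rewrite char_poly_scalar mupMl // mup_XsubCX eqxx.
Qed.

Lemma rank_eigenspace_trmx N (A : 'M[F]_N) a :
  \rank (eigenspace A^T a) = \rank (eigenspace A a).
Proof.
by rewrite /eigenspace !mxrank_ker -mxrank_tr linearB /= trmxK tr_scalar_mx.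
Qed.

End CharPoly.

Section SemisimpleEigenvalue.
Variables (F : fieldType) (k q : nat) (A : 'M[F]_(k + q)) (a : F).
Let B := A - a%:M.
Hypothesis rank_eigenspace : \rank (eigenspace A a) = k.
Hypothesis semisimple : forall u : 'rV_(k + q), u *m B *m B = 0 -> u *m B = 0.

Lemma eigenspace_cap_image p (W : 'M_(p, k + q)) :
  (W <= eigenspace A a)%MS -> (W <= B)%MS -> W = 0.
Proof.
move=> /sub_kermxP WB /submxP [U defW]; rewrite defW.
apply/row_matrixP => i; rewrite row0 row_mul semisimple //.
by rewrite -!row_mul -defW WB row0.
Qed.

Lemma rank_sub_scalar : \rank B = q.
Proof.
move: rank_eigenspace; rewrite /eigenspace mxrank_ker -/B => rk.
by apply/eqP; rewrite -(eqn_add2l k) -[X in (X + _)%N]rk subnK ?rank_leq_col.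
Qed.

(* The eigenspace meets the image of [B] trivially, so bases of the two are
   complementary. *)
Lemma semisimple_block_similar : exists (P : 'M_(k + q)) (A2 : 'M_q),
  [/\ P \in unitmx, P *m A = block_mx a%:M 0 0 A2 *m P & ~~ eigenvalue A2 a].
Proof.
have [E eqE] : exists E : 'M_(k, k + q), (E :=: eigenspace A a)%MS.
  move: (row_base _) (eq_row_base (eigenspace A a)).
  by rewrite rank_eigenspace => E; exists E.
have [G eqG] : exists G : 'M_(q, k + q), (G :=: B)%MS.
  by move: (row_base _) (eq_row_base B); rewrite rank_sub_scalar => G; exists G.
have freeG : row_free G by rewrite /row_free eqG rank_sub_scalar.
have AB : A *m B = B *m A by rewrite /B mulmxBl mulmxBr scalar_mxC.
have GA_G : (G *m A <= G)%MS.
  rewrite eqG; have /submxP [U ->] : (G <= B)%MS by rewrite eqG.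
  by rewrite -mulmxA -AB mulmxA submxMl.
set A2 := G *m A *m pinvmx G.
have GA : G *m A = A2 *m G by rewrite mulmxKpV.
exists (col_mx E G), A2; split.
- have capEG : (E :&: G)%MS = 0.
    by apply: eigenspace_cap_image; rewrite -?eqE -?eqG ?capmxSl ?capmxSr.
  rewrite -row_full_unit /row_full -addsmxE.
  have := mxrank_sum_cap E G.
  by rewrite capEG mxrank0 addn0 eqE eqG rank_eigenspace rank_sub_scalar => ->.
- rewrite mul_col_mx mul_block_col !mul0mx addr0 add0r mul_scalar_mx -GA.
  by have /eigenspaceP -> : (E <= eigenspace A a)%MS by rewrite eqE.
- apply/eigenvalueP => -[v vA2 /negPf vN0].
  suff /eqP : v *m G = 0 by rewrite mulmx_free_eq0 // vN0.
  apply: eigenspace_cap_image; last by rewrite -eqG submxMl.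
  by apply/eigenspaceP; rewrite -mulmxA GA mulmxA vA2 scalemxAl.
Qed.

End SemisimpleEigenvalue.

Lemma mup_char_poly_semisimple (F : fieldType) N (A : 'M[F]_N) (a : F) :
  (forall u : 'rV_N, u *m (A - a%:M) *m (A - a%:M) = 0 -> u *m (A - a%:M) = 0) ->
  mup a (char_poly A) = \rank (eigenspace A a).
Proof.
move=> semisimple.
have [k rank_eigenspace] : exists k, \rank (eigenspace A a) = k by eexists.
rewrite rank_eigenspace.
have [q eN] : exists q, N = (k + q)%N.
  by exists (N - k)%N; rewrite subnKC // -rank_eigenspace rank_leq_col.
subst N.
have [P [A2 [uP PA NA2]]] := semisimple_block_similar rank_eigenspace semisimple.
by rewrite (char_poly_similar uP PA) mup_char_poly_block.
Qed.

Lemma mulmx_trmx_self_eq0 (R : realFieldType) n (v : 'rV[R]_n) :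
  v *m v^T = 0 -> v = 0.
Proof.
move=> /matrixP /(_ 0 0); rewrite !mxE => vv0.
have sq_ge0 j : 0 <= v 0 j * v^T j 0 by rewrite mxE -expr2 sqr_ge0.
apply/rowP => j; rewrite mxE.
have /eqP := psumr_eq0P (fun j _ => sq_ge0 j) vv0 (i := j) isT.
by rewrite mxE mulf_eq0 orbb => /eqP.
Qed.

Section OrthogonalProjection.
Variables (R : realFieldType) (r n : nat) (C : 'M[R]_(r, n)).

Lemma projC_tr : (projC C)^T = projC C.
Proof. by rewrite /projC !trmx_mul trmxK trmx_inv trmx_mul trmxK mulmxA. Qed.

Hypothesis freeC : row_free C.

Lemma unitmx_mul_tr : C *m C^T \in unitmx.
Proof.
rewrite -row_free_unit; apply: inj_row_free => v vCC.
apply/eqP; rewrite -(mulmx_free_eq0 _ freeC); apply/eqP/mulmx_trmx_self_eq0.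
by rewrite trmx_mul mulmxA -(mulmxA v) vCC mul0mx.
Qed.

Lemma mul_projC : C *m projC C = C.
Proof. by rewrite /projC !mulmxA mulmxV ?unitmx_mul_tr // mul1mx. Qed.

Lemma projC_idem : projC C *m projC C = projC C.
Proof. by rewrite {1}/projC -!mulmxA mul_projC mulmxA. Qed.

Lemma projC_eq0 (d : 'rV_n) : d *m projC C = 0 -> C *m d^T = 0.
Proof.
by move=> dP0; rewrite -mul_projC -mulmxA -projC_tr -trmx_mul dP0 trmx0 mulmx0.
Qed.

End OrthogonalProjection.

Lemma sum_cycle_diff (V : zmodType) m (x : 'I_m -> V) :
  \sum_i (x i - x (ord_pred i)) = 0.
Proof. by rewrite sumrB (reindex_inj (@ord_pred_inj m)) subrr. Qed.

Section CycleMap.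
Variables (R : realFieldType) (m n : nat) (r : 'I_m -> nat).
Variable C : forall i, 'M[R]_(r i, n).

Lemma row_cycmap X i : row i (cycmap C X) =
  row i X - 2^-1 *: ((row i X - row (ord_pred i) X) *m projC (C i)).
Proof. by apply/rowP => k; rewrite !mxE projC_tr. Qed.

Lemma cycmap_linear : linear (cycmap C).
Proof.
pose Q i := 2^-1 *: projC (C i).
have rowE X i : row i (cycmap C X) =
    row i X *m (1%:M - Q i) + row (ord_pred i) X *m Q i.
  rewrite row_cycmap mulmxBl scalerBr opprB mulmxBr mulmx1 -!scalemxAr.
  by rewrite addrA addrAC.
move=> c X Y; apply/row_matrixP => i.
rewrite !(linearP (row _)) /= !rowE !(linearP (row _)) /= !mulmxDl.
by rewrite -!scalemxAl scalerDr addrACA.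
Qed.

HB.instance Definition _ := GRing.isLinear.Build R _ _ _ (cycmap C) cycmap_linear.

Lemma mul_cycM_tr u : u *m (cycM C)^T = mxvec (cycmap C (vec_mx u)).
Proof. by rewrite trmxK (mul_rV_lin1 (mxvec \o cycmap C \o vec_mx)). Qed.

Hypothesis freeC : forall i, row_free (C i).
Hypothesis wcC : well_configured C.
Hypothesis m_gt0 : (0 < m)%N.
Let i0 := Ordinal m_gt0.

Lemma cycmap_fixed_rows X : cycmap C X = X -> forall i j, row i X = row j X.
Proof.
move=> fixX i j; apply: trmx_inj.
apply: (wcC (x := fun i => (row i X)^T)) => {i j} i.
apply/eqP; rewrite -subr_eq0 -mulmxBr -linearB /=; apply/eqP/projC_eq0 => //.
move/eqP: (congr1 (row i) fixX); rewrite row_cycmap -subr_eq0 addrAC subrr add0r.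
by rewrite oppr_eq0 scaler_eq0 invr_eq0 pnatr_eq0 => /eqP.
Qed.

Lemma cycmap_const_fixed X : (forall i j, row i X = row j X) -> cycmap C X = X.
Proof.
move=> rowsX; apply/row_matrixP => i.
by rewrite row_cycmap (rowsX (ord_pred i) i) subrr mul0mx scaler0 subr0.
Qed.

Lemma cycmap_semisimple X :
  cycmap C (cycmap C X - X) = cycmap C X - X -> cycmap C X = X.
Proof.
set Y := _ - X => fixY; apply/eqP; rewrite -subr_eq0 -/Y; apply/eqP.
have rowsY := cycmap_fixed_rows fixY.
pose d i := row i X - row (ord_pred i) X.
have rowY i : row i Y = (- 2^-1) *: (d i *m projC (C i)).
  by rewrite /Y linearB /= row_cycmap addrAC subrr add0r scaleNr.
pose c := row i0 Y.
have c_proj i : c *m projC (C i) = c.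
  by rewrite /c (rowsY _ i) rowY -scalemxAl -mulmxA projC_idem.
have c_norm i : c *m c^T = (- 2^-1) *: (d i *m c^T).
  rewrite {1}/c (rowsY _ i) rowY -scalemxAl -mulmxA -{1}projC_tr -trmx_mul.
  by rewrite c_proj.
have : \sum_(i < m) c *m c^T = 0.
  rewrite (eq_bigr _ (fun i _ => c_norm i)) -scaler_sumr -mulmx_suml.
  by rewrite sum_cycle_diff mul0mx scaler0.
rewrite sumr_const card_ord -scaler_nat => /eqP.
rewrite scaler_eq0 pnatr_eq0 eqn0Ngt m_gt0 /= => /eqP /mulmx_trmx_self_eq0 c0.
by apply/row_matrixP => i; rewrite row0 (rowsY i i0) -/c c0.
Qed.

Lemma rank_eigenspace_cycM_tr : \rank (eigenspace (cycM C)^T 1) = n.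
Proof.
pose rep (v : 'rV[R]_n) : 'M_(m, n) := const_mx 1 *m v.
have row_rep v i : row i (rep v) = v.
  by apply/rowP => k; rewrite !mxE big_ord1 mxE mul1r.
pose L : 'M[R]_(n, m * n) := lin1_mx (mxvec \o mulmx (const_mx 1 : 'cV[R]_m)).
have mulL v : v *m L = mxvec (rep v) by rewrite mul_rV_lin1.
have freeL : row_free L.
  apply: inj_row_free => v; rewrite mulL => /eqP; rewrite mxvec_eq0 => /eqP rep0.
  by rewrite -(row_rep v i0) rep0 row0.
suff -> : (eigenspace (cycM C)^T 1 :=: L)%MS by apply/eqP.
apply/eqmxP/andP; split.
- apply/rV_subP => u /eigenspaceP; rewrite scale1r mul_cycM_tr.
  move=> /(congr1 vec_mx); rewrite mxvecK => /cycmap_fixed_rows rowsU.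
  have -> : u = row i0 (vec_mx u) *m L.
    rewrite mulL -[LHS]vec_mxK; congr mxvec.
    by apply/row_matrixP => j; rewrite row_rep (rowsU j i0).
  exact: submxMl.
- apply/eigenspaceP/row_matrixP => j; rewrite scale1r row_mul mul_cycM_tr.
  have -> : row j L = row j 1%:M *m L by rewrite -row_mul mul1mx.
  rewrite mulL mxvecK cycmap_const_fixed //.
  by move=> i k; rewrite !row_rep.
Qed.

Lemma cycM_tr_semisimple (u : 'rV_(m * n)) :
  let B := (cycM C)^T - 1%:M in u *m B *m B = 0 -> u *m B = 0.
Proof.
move=> B; have mulB v : v *m B = mxvec (cycmap C (vec_mx v) - vec_mx v).
  by rewrite mulmxBr mulmx1 mul_cycM_tr linearB /= vec_mxK.
rewrite !mulB mxvecK => /eqP; rewrite mxvec_eq0 subr_eq0.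
move=> /eqP /cycmap_semisimple ->.
by rewrite subrr linear0.
Qed.

End CycleMap.

Unset Implicit Arguments. Set Strict Implicit.

Theorem lemma12 (R : realFieldType) (m n : nat) (r : 'I_m -> nat)
  (C : forall i, 'M[R]_(r i, n)) :
  (2 <= m)%N ->
  (forall i, row_free (C i)) ->
  well_configured C ->
  mup 1 (char_poly (cycM C)) = n /\ \rank (eigenspace (cycM C) 1) = n.
Proof.
move=> m_ge2 freeC wcC; have m_gt0 : (0 < m)%N := ltnW m_ge2.
rewrite -[cycM C]trmxK char_poly_trmx rank_eigenspace_trmx.
rewrite mup_char_poly_semisimple; last exact: cycM_tr_semisimple.
by rewrite rank_eigenspace_cycM_tr.
Qed.
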